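(* For every integer $N\ge2$ and every ORN design on $N$ nodes (with arbitrary, possibly unbounded, maximum latency) that guarantees throughput $r$, we have \[ r\;\le\;\frac12+\frac{1}{2(N-1)}. \]
   Context: Nodes are $[N]=\{1,\dots,N\}$. A connection schedule of size $N$ and period $T\ge1$ is a sequence of permutations $\pi_0,\dots,\pi_{T-1}$ of $[N]$; write $\pi_t=\pi_{t \bmod T}$ for all $t\in\mathbb Z$. Its virtual topology is the directed graph $G$ with vertex set $[N]\times\mathbb Z$ whose edges are the virtual edges $(i,t)\to(i,t+1)$ and the physical edges $(i,t)\to(\pi_t(i),t+1)$, for all $i\in[N]$, $t\in\mathbb Z$. The latency of a finite directed path in $G$ is its number of edges. For $a,b\in[N]$, $t\in\mathbb Z$, $\mathcal P(a,b,t)$ is the set of paths in $G$ from $(a,t)$ to some vertex $(b,t')$, and $\mathcal P$ is the set of all paths. A flow is a function $f:\mathcal P\to[0,\infty)$; the load on an edge $e$ is $F(f,e)=\sum_{P\ni e}f(P)$; $f$ is feasible if $F(f,e)\le 1$ for every physical edge $e$. An oblivious routing scheme $R$ assigns to each $(a,b,t)\in[N]\times[N]\times\mathbb Z$ a flow $R_{a,b,t}$ supported on $\mathcal P(a,b,t)$ with $\sum_P R_{a,b,t}(P)=1$, which is periodic: $R_{a,b,t+T}$ is obtained from $R_{a,b,t}$ by shifting every path by $T$ in the time coordinate. An ORN design on $N$ nodes is a connection schedule together with an oblivious routing scheme on its virtual topology. A demand function $D$ assigns to each $t\in\mathbb Z$ an $N\times N$ matrix $D(t)$ with nonnegative entries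 $D(t,a,b)$; it requests throughput equal to the supremum over $t$ of the maximum row sum or column sum of $D(t)$. The induced flow is $f(R,D)=\sum_{a,b,t}D(t,a,b)R_{a,b,t}$. The design guarantees throughput $r$ if $f(R,D)$ is feasible for every demand function $D$ requesting throughput at most $r$. *)

From HB Require Import structures.
From mathcomp Require Import all_boot all_order all_algebra.
From mathcomp Require Import all_classical all_reals.
From mathcomp Require Import ereal esum.
From mathcomp Require Import fingroup perm.
Set Implicit Arguments. Unset Strict Implicit. Unset Printing Implicit Defensive.
Import Order.TTheory GRing.Theory Num.Theory.
Local Open Scope classical_set_scope.
Local Open Scope ring_scope.

(* A connection schedule of size N is given as a map pi : int -> {perm 'I_N},
   required (below) to be periodic with period T >= 1; this is the same as a
   sequence pi_0..pi_{T-1} extended by pi_t = pi_{t mod T}. *)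
Definition periodic_schedule (N T : nat) (pi : int -> {perm 'I_N}) : Prop :=
  (0 < T)%N /\ forall t : int, pi (t + T%:Z) = pi t.

(* An edge of the virtual topology: (i, t, b) is the edge leaving vertex (i,t);
   b = false : virtual edge (i,t) -> (i,t+1);
   b = true  : physical edge (i,t) -> (pi_t(i), t+1). *)
Definition edge (N : nat) := ('I_N * int * bool)%type.

(* A finite directed path: start vertex (i,t) and the sequence of edge kinds. *)
Definition vpath (N : nat) := ('I_N * int * seq bool)%type.

Definition step N (pi : int -> {perm 'I_N}) (i : 'I_N) (t : int) (b : bool) : 'I_N :=
  if b then pi t i else i.

Fixpoint walk_edges N (pi : int -> {perm 'I_N}) (i : 'I_N) (t : int) (s : seq bool)
  : seq (edge N) :=
  if s is b :: s' then (i, t, b) :: walk_edges pi (step pi i t b) (t + 1) s' else [::].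

Fixpoint walk_end N (pi : int -> {perm 'I_N}) (i : 'I_N) (t : int) (s : seq bool)
  : 'I_N :=
  if s is b :: s' then walk_end pi (step pi i t b) (t + 1) s' else i.

Definition path_edges N (pi : int -> {perm 'I_N}) (P : vpath N) : seq (edge N) :=
  walk_edges pi P.1.1 P.1.2 P.2.

(* The path ends at vertex (path_end P, P.1.2 + size P.2). *)
Definition path_end N (pi : int -> {perm 'I_N}) (P : vpath N) : 'I_N :=
  walk_end pi P.1.1 P.1.2 P.2.

Definition in_Pabt N (pi : int -> {perm 'I_N}) (a b : 'I_N) (t : int) (P : vpath N) : Prop :=
  P.1.1 = a /\ P.1.2 = t /\ path_end pi P = b.

Definition is_physical N (e : edge N) : bool := e.2.

Definition shift_path N (T : nat) (P : vpath N) : vpath N := (P.1.1, P.1.2 + T%:Z, P.2).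

Definition load (R : realType) N (pi : int -> {perm 'I_N}) (f : vpath N -> \bar R)
  (e : edge N) : \bar R :=
  \esum_(P in [set P : vpath N | e \in path_edges pi P]) f P.

Definition feasible (R : realType) N (pi : int -> {perm 'I_N}) (f : vpath N -> \bar R) : Prop :=
  forall e : edge N, is_physical e -> (load pi f e <= 1)%E.

Definition oblivious_routing (R : realType) N (T : nat) (pi : int -> {perm 'I_N})
  (Rt : 'I_N -> 'I_N -> int -> vpath N -> \bar R) : Prop :=
  (forall a b t P, (0 <= Rt a b t P)%E /\ Rt a b t P \is a fin_num) /\
  (forall a b t P, ~ in_Pabt pi a b t P -> Rt a b t P = 0%E) /\
  (forall a b t, \esum_(P in [set: vpath N]) Rt a b t P = 1%E) /\
  (forall a b t P, Rt a b (t + T%:Z) (shift_path T P) = Rt a b t P).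

Definition demand_ok (R : realType) N (D : int -> 'M[R]_N) : Prop :=
  forall t a b, 0 <= D t a b.

Definition requests_at_most (R : realType) N (D : int -> 'M[R]_N) (r : R) : Prop :=
  forall t : int,
    (forall a, \sum_(b < N) D t a b <= r) /\ (forall b, \sum_(a < N) D t a b <= r).

Definition induced_flow (R : realType) N (Rt : 'I_N -> 'I_N -> int -> vpath N -> \bar R)
  (D : int -> 'M[R]_N) : vpath N -> \bar R :=
  fun P => \esum_(x in [set: 'I_N * 'I_N * int]) ((D x.2 x.1.1 x.1.2)%:E * Rt x.1.1 x.1.2 x.2 P)%E.

Definition guarantees_throughput (R : realType) N (pi : int -> {perm 'I_N})
  (Rt : 'I_N -> 'I_N -> int -> vpath N -> \bar R) (r : R) : Prop :=
  forall D : int -> 'M[R]_N, demand_ok D -> requests_at_most D r ->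
    feasible pi (induced_flow Rt D).

From HB Require Import structures.
From mathcomp Require Import all_boot all_order all_algebra.
From mathcomp Require Import all_classical all_reals.
From mathcomp Require Import ereal esum.
From mathcomp Require Import fingroup perm.
From mathcomp Require Import ring lra.
Import Order.TTheory GRing.Theory Num.Theory.
Set Implicit Arguments. Unset Strict Implicit. Unset Printing Implicit Defensive.
Local Open Scope classical_set_scope.
Local Open Scope ring_scope.

(* Route two kinds of time-invariant demand: the uniform demand U sending
   r/(N-1) between every ordered pair a <> b, and for each pair (a,b) the demand
   sending r from a to b only.  A path from a to b <> a uses two physical edges
   unless its only physical edge is direct, i.e. leaves a at a time t with
   pi_t(a) = b; so on every route R_{a,b,t} the expected numbers of physical and
   of direct a->b edges add up to at least 2.  Periodicity of schedule and
   routing equates the load on the edges of one period with the crossings of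
   the demand released during one period.  The N T physical edges of a period
   bound the load of U, the direct edges (N T of them over all pairs) bound the
   loads of the pair demands, and weighting the latter by 1/(N-1) gives
   2 r N T <= N T + N T/(N-1). *)

Lemma periodicZ (A : Type) (f : int -> A) (p : int) :
  (forall t, f (t + p) = f t) -> forall k t, f (t + k * p) = f t.
Proof.
move=> fp; have fpn (n : nat) t : f (t + n%:Z * p) = f t.
  elim: n t => [|n IHn] t; first by rewrite mul0r addr0.
  by rewrite -addn1 PoszD mulrDl mul1r addrA fp IHn.
case=> [n|n] t; first exact: fpn.
by rewrite -[LHS](fpn n.+1) NegzE mulNr addrNK.
Qed.

Definition shift_edge N (c : int) (e : edge N) : edge N := (e.1.1, e.1.2 + c, e.2).
Definition shift_vpath N (c : int) (P : vpath N) : vpath N := (P.1.1, P.1.2 + c, P.2).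

Lemma shift_edgeK N c : cancel (@shift_edge N c) (shift_edge (- c)).
Proof. by case=> [[i t] b]; rewrite /shift_edge /= addrK. Qed.

Section ScheduleShift.
Variables (N : nat) (pi : int -> {perm 'I_N}) (c : int).
Hypothesis pi_c : forall t, pi (t + c) = pi t.

Lemma walk_edges_shift s i t :
  walk_edges pi i (t + c) s = map (shift_edge c) (walk_edges pi i t s).
Proof.
elim: s i t => [|b s IHs] i t //=.
by rewrite /step pi_c -IHs addrAC.
Qed.

Lemma mem_path_edges_shift e P :
  (shift_edge c e \in path_edges pi (shift_vpath c P)) = (e \in path_edges pi P).
Proof.
rewrite /path_edges /= walk_edges_shift mem_map //.
exact: can_inj (@shift_edgeK N c).
Qed.

End ScheduleShift.

Definition in_window (T : nat) (t : int) : bool := 0 <= t < T%:Z.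

Lemma in_window_modz T t : (0 < T)%N -> in_window T (t %% T%:Z)%Z.
Proof.
by move=> T_gt0; rewrite /in_window modz_ge0 ?ltz_pmod // ?ltz_nat // eqz_nat -lt0n.
Qed.

Lemma divz_window T t k : (0 < T)%N -> in_window T t -> ((t + k * T%:Z) %/ T%:Z)%Z = k.
Proof.
move=> T_gt0 tw; rewrite addrC divzMDl; last by rewrite eqz_nat -lt0n.
by rewrite divz_small ?addr0.
Qed.

Section WindowRepresentatives.
Variables (R : realType) (Z : choiceType) (T : nat) (act : int -> Z -> Z).
Hypotheses (T_gt0 : (0 < T)%N) (act0 : forall z, act 0 z = z)
  (actD : forall c d z, act c (act d z) = act (d + c) z).

Definition time_equivariant (tau : Z -> int) := forall c z, tau (act c z) = tau z + c.

Definition fold_window (tau : Z -> int) (z : Z) : Z := act (- (tau z %/ T%:Z)%Z * T%:Z) z.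

Lemma in_window_fold tau z : time_equivariant tau -> in_window T (tau (fold_window tau z)).
Proof. by move=> tauE; rewrite tauE mulNr; exact: in_window_modz. Qed.

Lemma fold_windowK sigma tau z : time_equivariant tau -> in_window T (tau z) ->
  fold_window tau (fold_window sigma z) = z.
Proof.
move=> tauE tz; rewrite [in LHS]/fold_window tauE divz_window // actD.
by rewrite -mulrDl addrN mul0r act0.
Qed.

(* Each orbit of the translations by multiples of [T] has exactly one point
   whose [sigma]-time, and exactly one whose [tau]-time, lies in the window. *)
Lemma esum_fold_window (S : set Z) (f : Z -> \bar R) sigma tau :
  time_equivariant sigma -> time_equivariant tau ->
  (forall k z, S z -> S (act (k * T%:Z) z)) -> (forall k z, f (act (k * T%:Z) z) = f z) ->
  \esum_(z in [set z | S z /\ in_window T (sigma z)]) f z =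
  \esum_(z in [set z | S z /\ in_window T (tau z)]) f z.
Proof.
move=> sigmaE tauE S_act f_act.
rewrite (reindex_esum [set z | S z /\ in_window T (tau z)] _ (fold_window sigma));
  last first.
  split.
  - by move=> z [Sz _]; split; [exact: S_act | exact: in_window_fold].
  - move=> z1 z2 /set_mem[_ w1] /set_mem[_ w2] e12.
    by rewrite -(fold_windowK sigma tauE w1) e12 fold_windowK.
  - move=> z [Sz wz]; exists (fold_window tau z); last exact: fold_windowK.
    by split; [exact: S_act | exact: in_window_fold].
by apply: eq_esum => z _; rewrite f_act.
Qed.

End WindowRepresentatives.

Section PeriodicLoad.
Variables (R : realType) (N T : nat) (pi : int -> {perm 'I_N}) (A : choiceType).
Hypotheses (T_gt0 : (0 < T)%N) (pi_periodic : forall k t, pi (t + k * T%:Z) = pi t).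
Variables (g : A * int -> vpath N -> \bar R) (H : pred (edge N)).
Hypotheses (g_ge0 : forall x P, (0 <= g x P)%E)
  (g_periodic : forall k x P,
     g (x.1, x.2 + k * T%:Z) (shift_vpath (k * T%:Z) P) = g x P)
  (H_periodic : forall k e, H (shift_edge (k * T%:Z) e) = H e).

Lemma esum_window_loads :
  \esum_(e in [set e : edge N | H e /\ in_window T e.1.2])
     \esum_(P in [set P | e \in path_edges pi P]) \esum_(x in [set: A * int]) g x P =
  \esum_(x in [set x : A * int | in_window T x.2]) \esum_(P in [set: vpath N])
     \esum_(e in [set e | H e /\ e \in path_edges pi P]) g x P.
Proof.
pose act c (z : A * int * (vpath N * edge N)) :=
  ((z.1.1, z.1.2 + c), (shift_vpath c z.2.1, shift_edge c z.2.2)).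
pose S (z : A * int * (vpath N * edge N)) := H z.2.2 /\ z.2.2 \in path_edges pi z.2.1.
pose swap (z : A * int * (vpath N * edge N)) := (z.2.2, (z.2.1, z.1)).
under eq_esum do rewrite esum_esum //.
rewrite esum_esum //.
under [RHS]eq_esum do rewrite esum_esum //.
rewrite [RHS]esum_esum //.
have -> : [set e | H e /\ in_window T e.1.2]
      `*`` (fun e => [set P | e \in path_edges pi P] `*`` (fun=> [set: A * int]))
    = swap @` [set z | S z /\ in_window T z.2.2.1.2].
  apply/seteqP; split.
  - by move=> [e [P x]] /= [[He we] [eP _]]; exists (x, (P, e)).
  - by move=> _ [[x [P e]] /= [[He eP] we] <-].
rewrite esum_image /=; last by move=> [x1 [P1 e1]] [x2 [P2 e2]] _ _ [-> -> ->].
have -> : [set x | in_window T x.2]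
      `*`` (fun=> [set: vpath N] `*`` (fun P => [set e | H e /\ e \in path_edges pi P]))
    = [set z | S z /\ in_window T z.1.2].
  by apply/seteqP; split => -[x [P e]] /=; rewrite /S /=; tauto.
apply: (esum_fold_window (act := act)) => //.
- move=> [[a t] [[[i t'] s] [[j u] b]]].
  by rewrite /act /shift_vpath /shift_edge /= !addr0.
- move=> c d [[a t] [[[i t'] s] [[j u] b]]].
  by rewrite /act /shift_vpath /shift_edge /= !addrA.
- by move=> k [x [P e]] [He eP]; split; rewrite /= ?H_periodic ?mem_path_edges_shift.
- by move=> k [x [P e]]; exact: g_periodic.
Qed.

End PeriodicLoad.

Section EsumFacts.
Variables (R : realType) (I : choiceType).
Local Open Scope ereal_scope.

Lemma esumZl (S : set I) (f : I -> \bar R) (c : R) : (0 <= c)%R ->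
  (forall i, 0 <= f i) -> \esum_(i in S) (c%:E * f i) = c%:E * \esum_(i in S) f i.
Proof.
move=> c_ge0 f_ge0; rewrite /esum -ereal_supZl //; last first.
  by apply/set0P; exists 0; exists set0; [exact: fsets_set0|rewrite fsbig_set0].
congr ereal_sup; apply/seteqP; split => y.
- move=> [A [finA AS] <-]; exists (\sum_(x \in A) f x); first by exists A.
  by rewrite !fsbig_finite // ge0_sume_distrr.
- move=> [z [A [finA AS] <-] <-]; exists A => //.
  by rewrite !fsbig_finite // ge0_sume_distrr.
Qed.

Lemma esum_ge_set1 (S : set I) (f : I -> \bar R) i : (forall i, 0 <= f i) ->
  S i -> f i <= \esum_(j in S) f j.
Proof.
move=> f_ge0 Si; apply: esum_ge; exists [set i]; last by rewrite fsbig_set1.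
by split; [exact: finite_set1 | move=> _ ->].
Qed.

Lemma esum_ge_set2 (S : set I) (f : I -> \bar R) i j : (forall i, 0 <= f i) ->
  S i -> S j -> i <> j -> f i + f j <= \esum_(k in S) f k.
Proof.
move=> f_ge0 Si Sj ij; apply: esum_ge; exists [set i; j].
  by split; [rewrite finite_setU; split; exact: finite_set1 | move=> _ [->|->]].
rewrite fsbigU ?fsbig_set1 ?finite_set1 //.
by move=> _ [/= -> ji]; exfalso; apply: ij.
Qed.

End EsumFacts.

Lemma esum_finT (R : realType) (I : finType) (f : I -> \bar R) :
  (forall i, (0 <= f i)%E) -> \esum_(i in [set: I]) f i = \sum_(i : I) f i.
Proof.
move=> f_ge0; have -> : [set: I] = [set` enum I].
  by apply/seteqP; split => // i _; rewrite /= mem_enum.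
by rewrite esum_fset // -fsbig_seq ?enum_uniq // big_enum.
Qed.

Lemma esum_fin_pred (R : realType) (I : finType) (P : pred I) (f : I -> \bar R) :
  (forall i, (0 <= f i)%E) -> \esum_(i in [set i | P i]) f i = \sum_(i | P i) f i.
Proof.
move=> f_ge0; rewrite esum_mkcond esum_finT; last by move=> i; case: ifP.
by rewrite [RHS]big_mkcond; apply: eq_bigr => i _; rewrite mem_setE.
Qed.

Lemma esum_window (R : realType) (A : finType) (T : nat) (f : A * int -> \bar R) :
  (forall x, (0 <= f x)%E) ->
  \esum_(x in [set x | in_window T x.2]) f x = \sum_(x : A * 'I_T) f (x.1, x.2%:Z).
Proof.
move=> f_ge0.
have -> : [set x | in_window T x.2] = (fun x : A * 'I_T => (x.1, x.2%:Z)) @` setT.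
  apply/seteqP; split => [[a [n|n]]|_ [[a t] _ <-]]; rewrite /in_window /= ?ltz_nat //.
  by move=> nT; exists (a, Ordinal nT).
by rewrite esum_image ?esum_finT // => -[a1 t1] [a2 t2] _ _ [-> /val_inj ->].
Qed.

Section Walks.
Variables (N : nat) (pi : int -> {perm 'I_N}).

Lemma walk_edges_time i t s e : e \in walk_edges pi i t s -> t <= e.1.2.
Proof.
elim: s i t => [|b s IHs] i t //=; rewrite in_cons => /orP[/eqP -> //|/IHs].
by apply: le_trans; rewrite lerDl.
Qed.

Lemma walk_end_virtual i t s :
  {in walk_edges pi i t s, forall e, ~~ is_physical e} -> walk_end pi i t s = i.
Proof.
elim: s i t => [|[] s IHs] i t //= virt; first by have := virt _ (mem_head _ _).
by apply: IHs => e e_s; apply: virt; rewrite in_cons e_s orbT.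
Qed.

Lemma walk_first_physical i t s : walk_end pi i t s != i ->
  exists2 e, e \in walk_edges pi i t s & [/\ is_physical e, e.1.1 = i &
    {in walk_edges pi i t s, forall e', is_physical e' -> e' = e} ->
      pi e.1.2 i = walk_end pi i t s].
Proof.
elim: s i t => [|[] s IHs] i t /=; first by rewrite eqxx.
- move=> _; exists (i, t, true); first exact: mem_head.
  split=> // uniq_e; apply/esym/walk_end_virtual => e e_s; apply/negP => phys_e.
  have := walk_edges_time e_s; rewrite (uniq_e e) ?in_cons ?e_s ?orbT //=.
  by rewrite leNgt ltrDl.
- move=> /IHs[e e_s [phys_e e_i uniq_e]]; exists e; first by rewrite in_cons e_s orbT.
  split=> // uniq_e'; apply: uniq_e => e' e'_s.
  by apply: uniq_e'; rewrite in_cons e'_s orbT.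
Qed.

End Walks.

Definition direct_edge N (pi : int -> {perm 'I_N}) (a b : 'I_N) (e : edge N) : bool :=
  [&& e.1.1 == a, is_physical e & pi e.1.2 a == b].

Lemma esum_physical_direct_ge (R : realType) N (pi : int -> {perm 'I_N}) (a b : 'I_N)
    (P : vpath N) (c : \bar R) :
  (0 <= c)%E -> a != b -> P.1.1 = a -> path_end pi P = b ->
  (c + c <= \esum_(e in [set e | is_physical e /\ e \in path_edges pi P]) c
          + \esum_(e in [set e | direct_edge pi a b e /\ e \in path_edges pi P]) c)%E.
Proof.
move=> c_ge0 ab Pa Pb; have moves : walk_end pi P.1.1 P.1.2 P.2 != P.1.1.
  by move: Pb; rewrite /path_end => ->; rewrite Pa eq_sym.
(* The first physical edge leaves [a]; if it is the only one, it lands on [b]. *)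
have [e e_P [phys_e e_a single_e]] := walk_first_physical moves.
have [[e' [e'_P phys_e' e'e]]|] :=
  pselect (exists e', [/\ e' \in path_edges pi P, is_physical e' & e' <> e]).
- rewrite -[leLHS]adde0; apply: leeD; last exact: esum_ge0.
  by apply: (esum_ge_set2 (fun=> c_ge0) (i := e) (j := e')) => // /esym.
- move=> /forallNP single; have direct_e : direct_edge pi a b e.
    rewrite /direct_edge -Pa e_a eqxx phys_e single_e /=; first exact/eqP.
    by move=> e' e'_P phys_e'; apply: contrapT => e'e; apply: (single e').
  by apply: leeD; apply: (esum_ge_set1 (fun=> c_ge0) (i := e)).
Qed.

Section Routing.
Variables (R : realType) (N T : nat) (pi : int -> {perm 'I_N})
  (Rt : 'I_N -> 'I_N -> int -> vpath N -> \bar R).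
Hypothesis routing : oblivious_routing T pi Rt.

Lemma oblivious_routing_periodic k a b t P :
  Rt a b (t + k * T%:Z) (shift_vpath (k * T%:Z) P) = Rt a b t P.
Proof.
pose f s := Rt a b (t + s) (shift_vpath s P).
have f_periodic s : f (s + T%:Z) = f s.
  by rewrite /f -(routing.2.2.2 a b (t + s)) /shift_path /shift_vpath /= !addrA.
have := periodicZ f_periodic k 0; rewrite /f add0r => ->.
by rewrite /shift_vpath !addr0 -!surjective_pairing.
Qed.

Definition crossings (H : pred (edge N)) (a b : 'I_N) (t : int) : \bar R :=
  \esum_(P in [set: vpath N])
    \esum_(e in [set e | H e /\ e \in path_edges pi P]) Rt a b t P.

Lemma crossings_ge0 H a b t : (0 <= crossings H a b t)%E.
Proof. by do 2!apply: esum_ge0 => ? _; exact: (routing.1 a b t _).1. Qed.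

Lemma two_le_crossings a b t : a != b ->
  (2%:E <= crossings (@is_physical N) a b t + crossings (direct_edge pi a b) a b t)%E.
Proof.
move=> ab; have Rt_ge0 P : (0 <= Rt a b t P)%E := (routing.1 a b t P).1.
have -> : 2%:E = \esum_(P in [set: vpath N]) (Rt a b t P + Rt a b t P)%E.
  by rewrite esumD // routing.2.2.1.
rewrite /crossings -esumD => [|P _|P _]; [|by apply: esum_ge0..].
apply: le_esum => P _; have [[Pa [_ Pb]] | notP] := pselect (in_Pabt pi a b t P).
- exact: esum_physical_direct_ge.
- by rewrite (routing.2.1 a b t P notP) adde0; apply: adde_ge0; apply: esum_ge0.
Qed.

End Routing.

Section WindowEdges.
Variables (R : realType) (N T : nat) (pi : int -> {perm 'I_N}).

Lemma esum_window_physical :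
  \esum_(e in [set e : edge N | is_physical e /\ in_window T e.1.2]) (1%E : \bar R) =
  ((N * T)%:R)%:E.
Proof.
have -> : [set e : edge N | is_physical e /\ in_window T e.1.2] =
    (fun x : 'I_N * 'I_T => (x.1, x.2%:Z, true)) @` setT.
  apply/seteqP; split => [[[i [n|n]] []] [] //= _|_ [[i t] _ <-]].
    by rewrite /in_window ltz_nat => nT; exists (i, Ordinal nT).
  by split; rewrite //= /in_window ltz_nat ltn_ord.
rewrite esum_image ?esum_finT // => [|[i1 t1] [i2 t2] _ _ [-> /val_inj ->] //].
by rewrite sumEFin sumr_const card_prod !card_ord.
Qed.

Lemma esum_window_direct a b :
  \esum_(e in [set e | direct_edge pi a b e /\ in_window T e.1.2]) (1%E : \bar R) =
  ((\sum_(t < T | pi t%:Z a == b) 1)%N%:R)%:E.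
Proof.
have -> : [set e | direct_edge pi a b e /\ in_window T e.1.2] =
    (fun t : 'I_T => (a, t%:Z, true)) @` [set t : 'I_T | pi t%:Z a == b].
  apply/seteqP; split => [[[i [n|n]] c] [] //|_ [t tab <-]].
    rewrite /direct_edge /in_window /= ltz_nat => /and3P[/eqP -> -> nab] nT.
    by exists (Ordinal nT).
  by split; rewrite /direct_edge /in_window ?ltz_nat //= eqxx tab.
rewrite esum_image ?esum_fin_pred // => [|t1 t2 _ _ [/val_inj]] //.
by rewrite sumEFin natr_sum.
Qed.

Lemma sum_direct_edges :
  (\sum_(a < N) \sum_(b < N) \sum_(t < T | pi t%:Z a == b) 1 = N * T)%N.
Proof.
have row a : (\sum_(b < N) \sum_(t < T | pi t%:Z a == b) 1 = T)%N.
  transitivity (\sum_(t < T) 1)%N; last by rewrite big_const_ord iter_addn_0 mul1n.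
  by rewrite [RHS](partition_big (fun t : 'I_T => pi t%:Z a) xpredT).
by rewrite (eq_bigr _ (fun a _ => row a)) big_const_ord iter_addn_0 mulnC.
Qed.

End WindowEdges.

Section Demands.
Variables (R : realType) (N : nat).

Definition uniform_demand (u : R) : 'M[R]_N := \matrix_(a, b) (if a != b then u else 0).

Definition pair_demand (a b : 'I_N) (c : R) : 'M[R]_N :=
  \matrix_(i, j) (if (i == a) && (j == b) then c else 0).

Lemma uniform_demand_ok u : 0 <= u -> demand_ok (fun=> uniform_demand u).
Proof. by move=> u_ge0 t a b; rewrite mxE; case: ifP. Qed.

Lemma uniform_demand_row u a : \sum_b uniform_demand u a b = u *+ N.-1.
Proof.
under eq_bigr do rewrite mxE; rewrite -big_mkcond sumr_const; congr (_ *+ _).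
by have := cardC1 a; rewrite card_ord => <-; apply: eq_card => b; rewrite !inE eq_sym.
Qed.

Lemma uniform_demand_col u b : \sum_a uniform_demand u a b = u *+ N.-1.
Proof.
rewrite -(uniform_demand_row u b); apply: eq_bigr => a _.
by rewrite !mxE eq_sym.
Qed.

Lemma uniform_demand_requests u : requests_at_most (fun=> uniform_demand u) (u *+ N.-1).
Proof. by move=> t; split=> a; rewrite ?uniform_demand_row ?uniform_demand_col. Qed.

Lemma pair_demand_ok a b c : 0 <= c -> demand_ok (fun=> pair_demand a b c).
Proof. by move=> c_ge0 t i j; rewrite mxE; case: ifP. Qed.

Lemma pair_demand_requests a b c : 0 <= c -> requests_at_most (fun=> pair_demand a b c) c.
Proof.
move=> c_ge0 t; split=> i; under eq_bigr do rewrite mxE.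
- case: (i =P a) => _ /=; last by rewrite big1.
  by rewrite -big_mkcond big_pred1_eq.
- case: (i =P b) => _ /=; last by rewrite big1 // => j _; rewrite andbF.
  by under eq_bigr do rewrite andbT; rewrite -big_mkcond big_pred1_eq.
Qed.

End Demands.

Section ThroughputBound.
Variables (R : realType) (N T : nat) (pi : int -> {perm 'I_N})
  (Rt : 'I_N -> 'I_N -> int -> vpath N -> \bar R) (r : R).
Hypotheses (N_ge2 : (2 <= N)%N) (schedule : periodic_schedule T pi)
  (routing : oblivious_routing T pi Rt) (throughput : guarantees_throughput pi Rt r).

Let T_gt0 : (0 < T)%N := schedule.1.
Let pi_periodic : forall k t, pi (t + k * T%:Z) = pi t := periodicZ schedule.2.
Local Notation window := ('I_N * 'I_N * 'I_T)%type.
Local Notation cross := (crossings pi Rt).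

Lemma window_load_le (M : 'M[R]_N) (H : pred (edge N)) :
  demand_ok (fun=> M) -> requests_at_most (fun=> M) r ->
  (forall e, H e -> is_physical e) -> (forall k e, H (shift_edge (k * T%:Z) e) = H e) ->
  (\sum_(x : window) (M x.1.1 x.1.2)%:E * cross H x.1.1 x.1.2 x.2%:Z
     <= \esum_(e in [set e | H e /\ in_window T e.1.2]) 1)%E.
Proof.
move=> M_ok M_req H_physical H_periodic.
have M_ge0 a b : 0 <= M a b := M_ok 0 a b.
have Rt_ge0 a b t P : (0 <= Rt a b t P)%E := (routing.1 a b t P).1.
pose g (x : 'I_N * 'I_N * int) P := ((M x.1.1 x.1.2)%:E * Rt x.1.1 x.1.2 x.2 P)%E.
have g_ge0 x P : (0 <= g x P)%E by apply: mule_ge0; rewrite ?lee_fin.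
have cross_g x : ((M x.1.1 x.1.2)%:E * cross H x.1.1 x.1.2 x.2 =
    \esum_(P in [set: vpath N])
      \esum_(e in [set e | H e /\ e \in path_edges pi P]) g x P)%E.
  rewrite -esumZl //; last by move=> P; apply: esum_ge0.
  by apply: eq_esum => P _; rewrite esumZl.
rewrite -(@esum_window _ _ T
  (fun x : _ * int => (M x.1.1 x.1.2)%:E * cross H x.1.1 x.1.2 x.2)%E);
  last by move=> x; apply: mule_ge0; [rewrite lee_fin | exact: (crossings_ge0 routing)].
rewrite (eq_esum (fun x _ => cross_g x)).
rewrite -(esum_window_loads T_gt0 pi_periodic) //; last first.
  by move=> k x P; rewrite /g /= (oblivious_routing_periodic routing).
by apply: le_esum => e [He _]; exact: (throughput M_ok M_req (H_physical e He)).
Qed.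

Hypothesis r_ge0 : 0 <= r.

Let w : R := (N%:R - 1)^-1.
Let U := uniform_demand N (r * w).

Let w_gt0 : 0 < w.
Proof. by rewrite invr_gt0 subr_gt0 ltr1n. Qed.

Let rwN : r * w *+ N.-1 = r.
Proof.
rewrite -mulr_natr -subn1 natrB 1?ltnW // -mulrA mulVf ?mulr1 //.
by rewrite gt_eqF // subr_gt0 ltr1n.
Qed.

Lemma pair_crossings_ge0 (p : 'I_N * 'I_N) a b t :
  (0 <= (pair_demand p.1 p.2 r a b)%:E * cross (direct_edge pi p.1 p.2) a b t)%E.
Proof.
apply: mule_ge0; last exact: (crossings_ge0 routing).
by rewrite lee_fin (pair_demand_ok _ _ r_ge0 0).
Qed.

(* The weight [w] scales the pair demand [r] down to the uniform rate [r * w]. *)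
Lemma double_uniform_demand_le a b t :
  ((2 * U a b)%:E <= (U a b)%:E * cross (@is_physical N) a b t +
     w%:E * \sum_(p : 'I_N * 'I_N)
              (pair_demand p.1 p.2 r a b)%:E * cross (direct_edge pi p.1 p.2) a b t)%E.
Proof.
have cross_ge0 := crossings_ge0 routing.
have w_ge0 : (0 <= w%:E)%E by rewrite lee_fin ltW.
rewrite /U mxE; case: ifPn => [ab|_]; last first.
  by rewrite mulr0 mul0e add0e mule_ge0 // sume_ge0 // => p _; exact: pair_crossings_ge0.
apply: le_trans (_ : _ <= (r * w)%:E *
    (cross (@is_physical N) a b t + cross (direct_edge pi a b) a b t))%E _.
  rewrite mulrC EFinM; apply: lee_wpmul2l; first by rewrite lee_fin mulr_ge0 // ltW.
  exact: (two_le_crossings routing t ab).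
rewrite ge0_muleDr //; apply: leeD => //.
rewrite (bigD1 (a, b)) //= ge0_muleDr ?(pair_crossings_ge0 (a, b)) ?sume_ge0 //; last first.
  by move=> p _; exact: pair_crossings_ge0.
rewrite mxE !eqxx muleA -EFinM [w * r]mulrC leeDl // mule_ge0 // sume_ge0 // => p _.
exact: pair_crossings_ge0.
Qed.

Lemma uniform_window_load_le :
  (\sum_(x : window) (U x.1.1 x.1.2)%:E * cross (@is_physical N) x.1.1 x.1.2 x.2%:Z
     <= ((N * T)%:R)%:E)%E.
Proof.
rewrite -esum_window_physical; apply: window_load_le => //.
- by apply: uniform_demand_ok; rewrite mulr_ge0 // ltW.
- by rewrite -[in X in requests_at_most _ X]rwN; exact: uniform_demand_requests.
Qed.

Lemma pair_window_load_le (p : 'I_N * 'I_N) :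
  (\sum_(x : window) (pair_demand p.1 p.2 r x.1.1 x.1.2)%:E *
     cross (direct_edge pi p.1 p.2) x.1.1 x.1.2 x.2%:Z
   <= ((\sum_(t < T | pi t%:Z p.1 == p.2) 1)%N%:R)%:E)%E.
Proof.
rewrite -esum_window_direct; apply: window_load_le.
- exact: pair_demand_ok.
- exact: pair_demand_requests.
- by move=> e /and3P[].
- by move=> k e; rewrite /direct_edge /= pi_periodic.
Qed.

Lemma sum_uniform_window :
  \sum_(x : window) (2 * U x.1.1 x.1.2)%:E = (2 * r * (N * T)%:R)%:E.
Proof.
rewrite sumEFin; congr (_%:E).
rewrite -(pair_big xpredT xpredT (fun p (_ : 'I_T) => 2 * U p.1 p.2)) /=.
under eq_bigr do rewrite sumr_const card_ord.
rewrite sumrMnl -mulr_sumr -(pair_big xpredT xpredT (fun a b => U a b)) /=.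
under eq_bigr do rewrite uniform_demand_row rwN.
by rewrite sumr_const card_ord natrM; ring.
Qed.

Lemma window_demand_le :
  ((2 * r * (N * T)%:R)%:E <= ((N * T)%:R)%:E + w%:E * ((N * T)%:R)%:E)%E.
Proof.
rewrite -sum_uniform_window; apply: le_trans.
  by apply: lee_sum => x _; exact: (double_uniform_demand_le x.1.1 x.1.2 x.2%:Z).
rewrite big_split /=; apply: leeD; first exact: uniform_window_load_le.
rewrite -ge0_sume_distrr; last first.
  by move=> x _; apply: sume_ge0 => p _; exact: pair_crossings_ge0.
apply: lee_wpmul2l; first by rewrite lee_fin ltW.
rewrite exchange_big /=; apply: le_trans.
  by apply: lee_sum => p _; exact: pair_window_load_le.
rewrite sumEFin -natr_sum -(pair_big xpredT xpredT
  (fun a b => \sum_(t < T | pi t%:Z a == b) 1)%N) /=.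
by rewrite sum_direct_edges.
Qed.

Lemma nonneg_throughput_le : r <= 2^-1 + (2 * (N%:R - 1))^-1.
Proof.
have NT_gt0 : 0 < (N * T)%:R :> R by rewrite ltr0n muln_gt0 T_gt0 (ltn_trans _ N_ge2).
have : 2 * r <= 1 + w.
  rewrite -(ler_pM2r NT_gt0) [(1 + w) * _]mulrDl mul1r -lee_fin EFinD !EFinM.
  exact: window_demand_le.
by rewrite invfM -/w; lra.
Qed.

End ThroughputBound.

Theorem mainTheorem7 (R : realType) (N T : nat) (pi : int -> {perm 'I_N})
  (Rt : 'I_N -> 'I_N -> int -> vpath N -> \bar R) (r : R) :
  (2 <= N)%N ->
  periodic_schedule T pi ->
  oblivious_routing T pi Rt ->
  guarantees_throughput pi Rt r ->
  r <= 2^-1 + (2 * (N%:R - 1))^-1.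
Proof.
move=> N_ge2 schedule routing throughput.
have [r_ge0|r_lt0] := leP 0 r.
  exact: (nonneg_throughput_le N_ge2 schedule routing throughput r_ge0).
apply: le_trans (ltW r_lt0) _.
by rewrite addr_ge0 // invr_ge0 ?mulr_ge0 // subr_ge0 ler1n ltnW.
Qed.
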